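(* Let $X$ be a separable Hilbert space over $K$ (with norm induced by the inner product) with orthonormal basis $\{e_j\}_{j=1,2,\ldots}\cup\{e_i^*\}_{i=1,2,\ldots}$, and let $Z$ be the proper closed subspace with orthonormal basis $\{e_j\}$. Let $F:Z\to\mathbb{R}$ be a continuous functional with $F(0)=0$, and suppose there are positive constants $M_1,M_2$ such that for all orthogonal vectors $z_1,z_2$ lying in the union of the one-dimensional subspaces spanned by the individual $e_j$, $F^+(z_1)+F^+(z_2)\le M_1\|z_1+z_2\|_X$ and $F^-(z_1)+F^-(z_2)\le M_2\|z_1+z_2\|_X$. Then there exists a continuous $\hat F:X\to\mathbb{R}$ with $\hat F(z)=F(z)$ for $z\in Z$ and $|\hat F(x_1)+\hat F(x_2)|\le(M_1+M_2)\|x_1+x_2\|_X$ for all orthogonal vectors $x_1,x_2$ lying in the union of the one-dimensional subspaces spanned by the individual $e_j$ or $e_i^*$.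
   Context: $K$ is $\mathbb{R}$ or $\mathbb{C}$. $F^+(z)=\max[F(z),0]$ and $F^-(z)=\max[-F(z),0]$. *)

From mathcomp Require Import all_boot all_order all_algebra.
From mathcomp Require Import reals.
From mathcomp.real_closed Require Import complex.

Set Implicit Arguments.
Unset Strict Implicit.
Unset Printing Implicit Defensive.

Import Order.TTheory GRing.Theory Num.Theory.
Local Open Scope ring_scope.

Variant scalars := RealScalars | ComplexScalars.

Definition scal (R : realType) (s : scalars) : numFieldType :=
  match s with RealScalars => (R : numFieldType) | ComplexScalars => (R[i] : numFieldType) end.

Definition sconj (R : realType) (s : scalars) : scal R s -> scal R s :=
  match s return scal R s -> scal R s with
  | RealScalars => fun x => x
  | ComplexScalars => fun x => @conjc R x
  end.

Definition sre (R : realType) (s : scalars) : scal R s -> R :=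
  match s return scal R s -> R with
  | RealScalars => fun x => x
  | ComplexScalars => fun x => @complex.Re R x
  end.

Section Hilbert.
Variables (R : realType) (s : scalars) (V : lmodType (scal R s)).
Variable ip : V -> V -> scal R s.

Definition is_inner_product : Prop :=
  [/\ forall (a : scal R s) (x y z : V), ip (a *: x + y) z = a * ip x z + ip y z,
      forall x y : V, ip y x = sconj (ip x y),
      forall x : V, 0 <= ip x x
    & forall x : V, ip x x = 0 -> x = 0].

Definition hnorm (x : V) : R := Num.sqrt (sre (ip x x)).

Definition hcomplete : Prop :=
  forall u : nat -> V,
    (forall eps : R, 0 < eps -> exists N : nat, forall m n : nat,
        (N <= m)%N -> (N <= n)%N -> hnorm (u m - u n) < eps) ->
    exists l : V, forall eps : R, 0 < eps -> exists N : nat, forall n : nat,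
        (N <= n)%N -> hnorm (u n - l) < eps.

Definition in_span (f : nat -> V) (x : V) : Prop :=
  exists (n : nat) (c : nat -> scal R s), x = \sum_(k < n) c k *: f k.

Definition in_cspan (f : nat -> V) (x : V) : Prop :=
  forall eps : R, 0 < eps -> exists y : V, in_span f y /\ hnorm (x - y) < eps.

Definition hilbert_with_onb (e es : nat -> V) : Prop :=
  [/\ is_inner_product, hcomplete,
      [/\ forall j k : nat, ip (e j) (e k) = (j == k)%:R,
          forall i k : nat, ip (es i) (es k) = (i == k)%:R
        & forall j i : nat, ip (e j) (es i) = 0]
    & forall (x : V) (eps : R), 0 < eps -> exists y z : V,
        [/\ in_span e y, in_span es z & hnorm (x - (y + z)) < eps]].

Definition horth (x y : V) : Prop := ip x y = 0.

Definition on_axes (f : nat -> V) (x : V) : Prop :=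
  exists (j : nat) (a : scal R s), x = a *: f j.

Definition continuous_on (A : V -> Prop) (F : V -> R) : Prop :=
  forall x : V, A x -> forall eps : R, 0 < eps ->
    exists2 delta : R, 0 < delta &
      forall y : V, A y -> hnorm (y - x) < delta -> `|F y - F x| < eps.

End Hilbert.

Definition posp (R : realType) (T : Type) (F : T -> R) (z : T) : R := Num.max (F z) 0.
Definition negp (R : realType) (T : Type) (F : T -> R) (z : T) : R := Num.max (- F z) 0.

From mathcomp Require Import all_boot all_order all_algebra.
From mathcomp Require Import classical_sets reals.
From mathcomp.real_closed Require Import complex.
From mathcomp Require Import ring lra.
From Stdlib Require Import ClassicalEpsilon.

Set Implicit Arguments.
Unset Strict Implicit.
Unset Printing Implicit Defensive.

Import Order.TTheory GRing.Theory Num.Theory.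
Local Open Scope ring_scope.

(* The extension is F o P, where P is the orthogonal projection onto Z, built
   as the limit of the Fourier partial sums sum_(k < n) <x, e_k> e_k: by
   Bessel's inequality their squared norms increase to a bounded limit, so they
   are Cauchy and converge by completeness. P is additive, 1-Lipschitz (so F o P
   is continuous), fixes Z and kills every e_i^*. Hence P maps two orthogonal
   axis vectors x1, x2 to orthogonal vectors on the e_j-axes, and the two
   hypotheses on F^+ and F^- bound |F(P x1) + F(P x2)| by
   (M1 + M2) ||P x1 + P x2|| = (M1 + M2) ||P (x1 + x2)|| <= (M1 + M2) ||x1 + x2||. *)

Definition scal_real (R : realType) (s : scalars) (t : R) : scal R s :=
  match s return scal R s with RealScalars => t | ComplexScalars => (t%:C)%C end.

Section Scalars.
Variables (R : realType) (s : scalars).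
Implicit Types a b : scal R s.

Lemma sconjD a b : sconj (a + b) = sconj a + sconj b.
Proof. by case: s a b => a b //=; rewrite rmorphD. Qed.

Lemma sconjN a : sconj (- a) = - sconj a.
Proof. by case: s a => a //=; rewrite rmorphN. Qed.

Lemma sconjM a b : sconj (a * b) = sconj a * sconj b.
Proof. by case: s a b => a b //=; rewrite rmorphM. Qed.

Lemma sconj0 : sconj (0 : scal R s) = 0.
Proof. by case: s => //; exact: conjc0. Qed.

Lemma sconj_real (t : R) : sconj (scal_real s t) = scal_real s t.
Proof. by case: s => //; exact: conjc_real. Qed.

Lemma sreD a b : sre (a + b) = sre a + sre b.
Proof. by case: s a b => a b //=; case: a => ? ?; case: b. Qed.

Lemma sreN a : sre (- a) = - sre a.
Proof. by case: s a => a //=; case: a. Qed.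

Lemma sre0 : sre (0 : scal R s) = 0.
Proof. by case: s. Qed.

Lemma sre_sum (I : Type) (r : seq I) (P : pred I) (F : I -> scal R s) :
  sre (\sum_(i <- r | P i) F i) = \sum_(i <- r | P i) sre (F i).
Proof. exact: (big_morph _ sreD sre0). Qed.

Lemma sre_conj a : sre (sconj a) = sre a.
Proof. by case: s a => a //=; case: a. Qed.

Lemma sreM_real (t : R) a : sre (scal_real s t * a) = t * sre a.
Proof. by case: s a => a //=; case: a => x y /=; rewrite mul0r subr0. Qed.

Lemma sre_ge0 a : 0 <= a -> 0 <= sre a.
Proof. by case: s a => a //=; rewrite lecE /= => /andP[]. Qed.

Lemma sre_eq0 a : 0 <= a -> sre a = 0 -> a = 0.
Proof. by case: s a => a //=; case: a => x y; rewrite lecE /= => /andP[/eqP -> _] ->. Qed.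

End Scalars.

Lemma sumr_ord_geq (M : zmodType) (f : nat -> M) (m n : nat) : (m <= n)%N ->
  \sum_(k < n) (if (m <= k)%N then f k else 0) = \sum_(k < n) f k - \sum_(k < m) f k.
Proof.
move=> le_mn; rewrite (big_ord_widen _ f le_mn) [X in _ - X]big_mkcond -sumrB /=.
by apply: eq_bigr => k _; rewrite leqNgt; case: ltnP; rewrite ?subrr ?subr0.
Qed.

Lemma normrD_le_max (R : realDomainType) (a b c d : R) :
  Num.max a 0 + Num.max b 0 <= c -> Num.max (- a) 0 + Num.max (- b) 0 <= d ->
  `|a + b| <= c + d.
Proof.
have [ha hb] : a <= Num.max a 0 /\ b <= Num.max b 0 by rewrite !le_max !lexx.
have [ha' hb'] : - a <= Num.max (- a) 0 /\ - b <= Num.max (- b) 0 by rewrite !le_max !lexx.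
have [ha0 hb0] : 0 <= Num.max a 0 /\ 0 <= Num.max b 0 by rewrite !le_max !lexx !orbT.
have [ha0' hb0'] : 0 <= Num.max (- a) 0 /\ 0 <= Num.max (- b) 0 by rewrite !le_max !lexx !orbT.
move=> hc hd; rewrite ler_norml; apply/andP; split; lra.
Qed.

Lemma nondecreasing_bounded_cauchy (R : realType) (u : nat -> R) (B : R) :
  (forall m n, (m <= n)%N -> u m <= u n) -> (forall n, u n <= B) ->
  forall eps, 0 < eps -> exists N, forall m n, (N <= m)%N -> (m <= n)%N -> u n - u m < eps.
Proof.
move=> u_mono u_le_B eps eps_gt0.
pose E : set R := fun r => exists n, r = u n.
have supE : has_sup E by split; [exists (u 0%N), 0%N | exists B => _ [n ->]].
have [_ [N ->] lt_uN] := sup_adherent eps_gt0 supE.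
exists N => m n le_Nm _; have := u_mono _ _ le_Nm.
have : u n <= sup E by apply: sup_upper_bound => //; exists n.
lra.
Qed.

Section InnerProduct.
Variables (R : realType) (s : scalars) (V : lmodType (scal R s)).
Variable ip : V -> V -> scal R s.

Local Notation hn := (hnorm ip).

Lemma continuous_on_comp_contraction (A : V -> Prop) (F : V -> R) (P : V -> V) :
  (forall x, A (P x)) -> (forall x y, hn (P y - P x) <= hn (y - x)) ->
  continuous_on ip A F -> continuous_on ip (fun _ => True) (F \o P).
Proof.
move=> AP P_contr F_cont x _ eps eps_gt0.
have [d d_gt0 Fd] := F_cont _ (AP x) eps eps_gt0.
by exists d => // y _ yx_lt_d; apply: Fd => //; apply: le_lt_trans (P_contr x y) _.
Qed.

Hypothesis ip_inner : is_inner_product ip.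

Let nrm2 (x : V) : R := sre (ip x x).

Lemma ipC x y : ip y x = sconj (ip x y).
Proof. by case: ip_inner. Qed.

Lemma ipDl x y z : ip (x + y) z = ip x z + ip y z.
Proof. by case: ip_inner => + _ _ _ => /(_ 1 x y z); rewrite scale1r mul1r. Qed.

Lemma ip0l z : ip 0 z = 0.
Proof. by apply: (addrI (ip 0 z)); rewrite -ipDl !addr0. Qed.

Lemma ipZl a x z : ip (a *: x) z = a * ip x z.
Proof. by case: ip_inner => + _ _ _ => /(_ a x 0 z); rewrite addr0 ip0l addr0. Qed.

Lemma ipNl x z : ip (- x) z = - ip x z.
Proof. by rewrite -scaleN1r ipZl mulN1r. Qed.

Lemma ip_suml (I : Type) (r : seq I) (P : pred I) (f : I -> V) z :
  ip (\sum_(i <- r | P i) f i) z = \sum_(i <- r | P i) ip (f i) z.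
Proof. exact: (big_morph (fun x => ip x z) (fun x y => ipDl x y z) (ip0l z)). Qed.

Lemma ipDr x y z : ip z (x + y) = ip z x + ip z y.
Proof. by rewrite ipC ipDl sconjD -!ipC. Qed.

Lemma ip0r z : ip z 0 = 0.
Proof. by rewrite ipC ip0l sconj0. Qed.

Lemma ipZr a x z : ip z (a *: x) = sconj a * ip z x.
Proof. by rewrite ipC ipZl sconjM -ipC. Qed.

Lemma ipNr x z : ip z (- x) = - ip z x.
Proof. by rewrite ipC ipNl sconjN -ipC. Qed.

Lemma re_ipC x y : sre (ip y x) = sre (ip x y).
Proof. by rewrite ipC sre_conj. Qed.

Lemma nrm2_ge0 x : 0 <= nrm2 x.
Proof. by apply: sre_ge0; case: ip_inner. Qed.

Lemma nrm2_eq0 x : nrm2 x = 0 -> x = 0.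
Proof. by case: ip_inner => _ _ ge0 def0 /(sre_eq0 (ge0 x)) /def0. Qed.

Lemma nrm2D x y : nrm2 (x + y) = nrm2 x + nrm2 y + 2 * sre (ip x y).
Proof. by rewrite /nrm2 ipDl !ipDr !sreD (re_ipC x y); lra. Qed.

Lemma nrm2N x : nrm2 (- x) = nrm2 x.
Proof. by rewrite /nrm2 ipNl ipNr opprK. Qed.

Lemma nrm2B x y : nrm2 (x - y) = nrm2 x + nrm2 y - 2 * sre (ip x y).
Proof. by rewrite nrm2D nrm2N ipNr sreN; lra. Qed.

(* Expand 0 <= nrm2 (x + t y) at the minimising real t = - Re<x,y> / nrm2 y. *)
Lemma re_ip_sqr_le x y : sre (ip x y) ^+ 2 <= nrm2 x * nrm2 y.
Proof.
have [y0|y_neq0] := eqVneq (nrm2 y) 0.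
  by rewrite (nrm2_eq0 y0) ip0r sre0 expr0n /= /nrm2 ip0l sre0 mulr0.
have y_gt0 : 0 < nrm2 y by rewrite lt0r y_neq0 nrm2_ge0.
set b := sre (ip x y); pose t := - b / nrm2 y.
have := nrm2_ge0 (x + scal_real s t *: y).
rewrite nrm2D /nrm2 ipZr ipZl ipZr sconj_real !sreM_real -/(nrm2 x) -/(nrm2 y) -/b.
have expand : nrm2 x * nrm2 y - b ^+ 2
    = nrm2 y * (nrm2 x + t * (t * nrm2 y) + 2 * (t * b)) by rewrite /t; field.
by move=> ge0; rewrite -subr_ge0 expand mulr_ge0 // ltW.
Qed.

Lemma hnorm_ge0 x : 0 <= hn x.
Proof. exact: sqrtr_ge0. Qed.

Lemma hnorm_sqr x : hn x ^+ 2 = nrm2 x.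
Proof. by rewrite /hnorm sqr_sqrtr // nrm2_ge0. Qed.

Lemma hnorm0 : hn 0 = 0.
Proof. by rewrite /hnorm ip0l sre0 sqrtr0. Qed.

Lemma hnormN x : hn (- x) = hn x.
Proof. by rewrite /hnorm -/(nrm2 _) nrm2N. Qed.

Lemma hnormBC x y : hn (x - y) = hn (y - x).
Proof. by rewrite -hnormN opprB. Qed.

Lemma ler_hnorm x y : nrm2 x <= nrm2 y -> hn x <= hn y.
Proof. by move=> le_xy; rewrite /hnorm ler_sqrt // nrm2_ge0. Qed.

Lemma hnorm_eq0 x : hn x = 0 -> x = 0.
Proof.
move/eqP; rewrite sqrtr_eq0 => le0; apply: nrm2_eq0.
by apply/eqP; rewrite eq_le le0 nrm2_ge0.
Qed.

Lemma hnorm_lt_eq0 x : (forall eps, 0 < eps -> hn x < eps) -> x = 0.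
Proof.
move=> small; apply: hnorm_eq0; apply/eqP; rewrite eq_le hnorm_ge0 andbT leNgt.
by apply/negP => /small; rewrite ltxx.
Qed.

Lemma re_ip_le x y : sre (ip x y) <= hn x * hn y.
Proof.
apply: le_trans (ler_norm _) _.
rewrite -(@ler_pXn2r _ 2) ?nnegrE ?mulr_ge0 ?hnorm_ge0 //.
by rewrite real_normK ?num_real // exprMn !hnorm_sqr re_ip_sqr_le.
Qed.

Lemma hnormD_le x y : hn (x + y) <= hn x + hn y.
Proof.
rewrite -(@ler_pXn2r _ 2) ?nnegrE ?addr_ge0 ?hnorm_ge0 //.
by rewrite hnorm_sqr nrm2D -!hnorm_sqr sqrrD; have := re_ip_le x y; lra.
Qed.

Lemma hnormB_le x y z : hn (x - z) <= hn (x - y) + hn (y - z).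
Proof.
have -> : x - z = (x - y) + (y - z) by rewrite addrA subrK.
exact: hnormD_le.
Qed.

Lemma on_axes_cspan (f : nat -> V) x : on_axes f x -> in_cspan ip f x.
Proof.
move=> [j [a ->]] eps eps_gt0; exists (a *: f j); split; last by rewrite subrr hnorm0.
exists j.+1, (fun k => if k == j then a else 0).
rewrite big_ord_recr /= eqxx big1 ?add0r // => k _.
by rewrite (ltn_eqF (ltn_ord k)) scale0r.
Qed.

Definition hlim (u : nat -> V) (l : V) := forall eps : R, 0 < eps ->
  exists N : nat, forall n : nat, (N <= n)%N -> hn (u n - l) < eps.

Lemma hlim_unique u p q : hlim u p -> hlim u q -> p = q.
Proof.
move=> up uq; apply/subr0_eq/hnorm_lt_eq0 => eps eps_gt0.
have e2 : 0 < eps / 2 by rewrite divr_gt0.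
have [Np Hp] := up _ e2; have [Nq Hq] := uq _ e2.
have := Hp _ (leq_maxl Np Nq); have := Hq _ (leq_maxr Np Nq).
have := hnormB_le p (u (maxn Np Nq)) q; rewrite [hn (p - u _)]hnormBC; lra.
Qed.

Lemma hlimB u v p q : hlim u p -> hlim v q -> hlim (fun n => u n - v n) (p - q).
Proof.
move=> up vq eps eps_gt0; have e2 : 0 < eps / 2 by rewrite divr_gt0.
have [Np Hp] := up _ e2; have [Nq Hq] := vq _ e2.
exists (maxn Np Nq) => n; rewrite geq_max => /andP[/Hp un /Hq vn].
have -> : u n - v n - (p - q) = (u n - p) - (v n - q).
  by rewrite !opprB addrACA [RHS]addrACA [- v n + _]addrC.
by apply: le_lt_trans (hnormD_le _ _) _; rewrite hnormN; lra.
Qed.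

Lemma hlim_norm_le u l (B : R) : hlim u l -> (forall n, hn (u n) <= B) -> hn l <= B.
Proof.
move=> ul uB; rewrite leNgt; apply/negP => B_lt.
have gap : 0 < hn l - B by rewrite subr_gt0.
have [N HN] := ul _ gap; have := HN N (leqnn N); have := uB N.
have := hnormD_le (l - u N) (u N); rewrite subrK hnormBC; lra.
Qed.

Lemma hlim_eventually m u l : (forall n, (m <= n)%N -> u n = l) -> hlim u l.
Proof. by move=> ul eps eps_gt0; exists m => n /ul ->; rewrite subrr hnorm0. Qed.

Variable e : nat -> V.
Hypothesis e_orthonormal : forall j k, ip (e j) (e k) = (j == k)%:R.

Definition fsum (a : nat -> scal R s) (n : nat) : V := \sum_(k < n) a k *: e k.
Definition fcoef (x : V) (k : nat) : scal R s := ip x (e k).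
Definition fpart (x : V) (n : nat) : V := fsum (fcoef x) n.

Lemma ip_fsuml a n y : ip (fsum a n) y = \sum_(k < n) a k * ip (e k) y.
Proof. by rewrite ip_suml; apply: eq_bigr => k _; rewrite ipZl. Qed.

Lemma ip_fsum_e a n k : ip (fsum a n) (e k) = if (k < n)%N then a k else 0.
Proof.
rewrite ip_fsuml; elim: n => [|n IH]; first by rewrite big_ord0.
rewrite big_ord_recr /= IH e_orthonormal ltnS.
by case: (ltngtP k n) => [||->]; rewrite ?mulr0 ?addr0 // ?eqxx mulr1 add0r.
Qed.

Lemma nrm2_fsum a n : nrm2 (fsum a n) = \sum_(k < n) sre (a k * sconj (a k)).
Proof.
rewrite /nrm2 ip_fsuml sre_sum; apply: eq_bigr => k _.
by rewrite ipC ip_fsum_e ltn_ord.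
Qed.

Lemma fpartB x y n : fpart (x - y) n = fpart x n - fpart y n.
Proof.
rewrite /fpart /fsum -sumrB; apply: eq_bigr => k _.
by rewrite /fcoef ipDl ipNl scalerBl.
Qed.

Lemma re_ip_fpart x n : sre (ip x (fpart x n)) = nrm2 (fpart x n).
Proof.
rewrite re_ipC ip_fsuml nrm2_fsum !sre_sum; apply: eq_bigr => k _.
by rewrite [ip (e k) x]ipC.
Qed.

Lemma bessel_ineq x n : nrm2 (fpart x n) <= nrm2 x.
Proof. by have := nrm2_ge0 (x - fpart x n); rewrite nrm2B re_ip_fpart; lra. Qed.

Lemma nrm2_fpartB x m n : (m <= n)%N ->
  nrm2 (fpart x n - fpart x m) = nrm2 (fpart x n) - nrm2 (fpart x m).
Proof.
move=> le_mn.
have -> : fpart x n - fpart x m = fsum (fun k => if (m <= k)%N then fcoef x k else 0) n.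
  rewrite /fpart /fsum -(sumr_ord_geq (fun k => fcoef x k *: e k)) //.
  by apply: eq_bigr => k _; case: ifP; rewrite ?scale0r.
rewrite /fpart !nrm2_fsum -(sumr_ord_geq (fun k => sre (fcoef x k * sconj (fcoef x k)))) //.
by apply: eq_bigr => k _; case: ifP; rewrite ?sconj0 ?mulr0 ?sre0.
Qed.

Lemma fpart_cauchy x eps : 0 < eps -> exists N, forall m n,
  (N <= m)%N -> (N <= n)%N -> hn (fpart x m - fpart x n) < eps.
Proof.
move=> eps_gt0.
have mono m n : (m <= n)%N -> nrm2 (fpart x m) <= nrm2 (fpart x n).
  by move=> le_mn; rewrite -subr_ge0 -nrm2_fpartB // nrm2_ge0.
have [N HN] := nondecreasing_bounded_cauchy mono (bessel_ineq x) (mulr_gt0 eps_gt0 eps_gt0).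
have close m n : (N <= m)%N -> (m <= n)%N -> hn (fpart x n - fpart x m) < eps.
  move=> le_Nm le_mn; rewrite -(@ltr_pXn2r _ 2) ?nnegrE ?hnorm_ge0 ?ltW //.
  by rewrite hnorm_sqr nrm2_fpartB // expr2; apply: HN.
exists N => m n le_Nm le_Nn; have [le_mn|/ltnW le_nm] := leqP m n.
  by rewrite hnormBC; apply: close.
exact: close.
Qed.

Hypothesis ip_complete : hcomplete ip.

Definition proj (x : V) : V := epsilon (inhabits 0) (hlim (fpart x)).

Lemma proj_hlim x : hlim (fpart x) (proj x).
Proof. exact: epsilon_spec (ip_complete (fpart_cauchy x)). Qed.

Lemma projB x y : proj (x - y) = proj x - proj y.
Proof.
apply: (hlim_unique (proj_hlim _)) => eps.
by move=> /(hlimB (proj_hlim x) (proj_hlim y)) [N HN]; exists N => n /HN; rewrite fpartB.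
Qed.

Lemma proj_norm_le x : hn (proj x) <= hn x.
Proof. by apply: (hlim_norm_le (proj_hlim x)) => n; apply/ler_hnorm/bessel_ineq. Qed.

Lemma proj_contraction x y : hn (proj y - proj x) <= hn (y - x).
Proof. by rewrite -projB proj_norm_le. Qed.

Lemma proj_cspan x : in_cspan ip e (proj x).
Proof.
move=> eps /(proj_hlim x) [N HN]; exists (fpart x N); split; first by exists N, (fcoef x).
by rewrite hnormBC; apply: HN.
Qed.

Lemma proj_fsum a m : proj (fsum a m) = fsum a m.
Proof.
apply: (hlim_unique (proj_hlim _)); apply: (hlim_eventually (m := m)) => n le_mn.
rewrite /fpart {1 3}/fsum [RHS](big_ord_widen n (fun k => a k *: e k) le_mn) [RHS]big_mkcond.
by apply: eq_bigr => k _; rewrite /fcoef ip_fsum_e; case: ifP; rewrite ?scale0r.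
Qed.

Lemma proj_id z : in_cspan ip e z -> proj z = z.
Proof.
move=> z_cspan; apply/subr0_eq/hnorm_lt_eq0 => eps eps_gt0.
have e2 : 0 < eps / 2 by rewrite divr_gt0.
have [y [[m [a y_def]] zy]] := z_cspan _ e2.
have Py : proj y = y by rewrite y_def; exact: proj_fsum.
have -> : proj z - z = proj (z - y) - (z - y) by rewrite projB Py opprB addrA subrK.
apply: le_lt_trans (hnormD_le _ _) _; rewrite hnormN.
by have := proj_norm_le (z - y); lra.
Qed.

Lemma proj_orth x : (forall k, ip x (e k) = 0) -> proj x = 0.
Proof.
move=> x_orth; apply: (hlim_unique (proj_hlim _)); apply: (hlim_eventually (m := 0%N)) => n _.
by rewrite /fpart /fsum big1 // => k _; rewrite /fcoef x_orth scale0r.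
Qed.

Lemma projD x y : proj (x + y) = proj x + proj y.
Proof.
have proj0 : proj 0 = 0 by apply: proj_orth => k; rewrite ip0l.
have -> : x + y = x - (0 - y) by rewrite sub0r opprK.
by rewrite !projB proj0 sub0r opprK.
Qed.

Variable es : nat -> V.
Hypothesis e_es_orth : forall j i, ip (e j) (es i) = 0.

Lemma proj_axis x : on_axes e x \/ on_axes es x ->
  on_axes e (proj x) /\ (proj x = x \/ proj x = 0).
Proof.
case=> [x_e|[i [b ->]]]; first by rewrite (proj_id (on_axes_cspan x_e)); split; [|left].
rewrite proj_orth; last by move=> k; rewrite ipZl ipC e_es_orth sconj0 mulr0.
by split; [exists 0%N, 0; rewrite scale0r | right].
Qed.

Lemma proj_axes_orth x1 x2 :
  on_axes e x1 \/ on_axes es x1 -> on_axes e x2 \/ on_axes es x2 -> horth ip x1 x2 ->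
  [/\ on_axes e (proj x1), on_axes e (proj x2) & horth ip (proj x1) (proj x2)].
Proof.
move=> /proj_axis[ax1 P1] /proj_axis[ax2 P2] x12; split => //.
by case: P1 P2 => -> [] ->; rewrite /horth ?ip0l ?ip0r.
Qed.

End InnerProduct.

Theorem corollary5 (R : realType) (s : scalars) (V : lmodType (scal R s))
    (ip : V -> V -> scal R s) (e es : nat -> V)
    (HX : hilbert_with_onb ip e es)
    (F : V -> R) (M1 M2 : R)
    (Fcont : continuous_on ip (in_cspan ip e) F)
    (F0 : F 0 = 0)
    (M1pos : 0 < M1) (M2pos : 0 < M2)
    (Hplus : forall z1 z2 : V, on_axes e z1 -> on_axes e z2 -> horth ip z1 z2 ->
        posp F z1 + posp F z2 <= M1 * hnorm ip (z1 + z2))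
    (Hminus : forall z1 z2 : V, on_axes e z1 -> on_axes e z2 -> horth ip z1 z2 ->
        negp F z1 + negp F z2 <= M2 * hnorm ip (z1 + z2)) :
  exists Fh : V -> R,
    [/\ continuous_on ip (fun _ => True) Fh,
        forall z : V, in_cspan ip e z -> Fh z = F z
      & forall x1 x2 : V,
          (on_axes e x1 \/ on_axes es x1) -> (on_axes e x2 \/ on_axes es x2) ->
          horth ip x1 x2 ->
          `|Fh x1 + Fh x2| <= (M1 + M2) * hnorm ip (x1 + x2)].
Proof.
have [ip_inner ip_complete [e_onb _ e_es_orth] _] := HX.
have F_axes z1 z2 : on_axes e z1 -> on_axes e z2 -> horth ip z1 z2 ->
    `|F z1 + F z2| <= (M1 + M2) * hnorm ip (z1 + z2).
  by move=> ax1 ax2 z12; rewrite mulrDl; apply: normrD_le_max; [exact: Hplus | exact: Hminus].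
exists (F \o proj ip e); split.
- exact: continuous_on_comp_contraction (proj_cspan ip_inner e_onb ip_complete)
    (proj_contraction ip_inner e_onb ip_complete) Fcont.
- by move=> z /(proj_id ip_inner e_onb ip_complete) /= ->.
- move=> x1 x2 ax1 ax2 x12.
  have [Pax1 Pax2 Px12] := proj_axes_orth ip_inner e_onb ip_complete e_es_orth ax1 ax2 x12.
  apply: le_trans (F_axes _ _ Pax1 Pax2 Px12) _.
  rewrite -(projD ip_inner e_onb ip_complete) ler_pM2l ?addr_gt0 //.
  exact: (proj_norm_le ip_inner e_onb ip_complete (x1 + x2)).
Qed.
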